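(* Let $0<\lambda<1/e$ and $E(z)=\lambda e^z$. For every $r>0$, $\lim_{x\to\infty}L^r(x)/x=0$. Moreover, for all $s>r\ge 0$... more precisely for all real $s>r>0$ and every $\gamma>0$, $\lim_{x\to\infty}\bigl(L^s(x)\bigr)^\gamma/L^r(x)=0$.
   Context: For $0<\lambda<1/e$, $E(z)=\lambda e^z$ has real fixed points $\alpha<1<\beta$ with $E'(\beta)=\beta$. $S$ is the entire solution of Schröder's equation $S(\beta z)=E(S(z))$ with $S(0)=\beta$, $S'(0)=1$; it is real and strictly increasing on $\mathbb R$ and maps $\mathbb R$ bijectively onto $(\alpha,\infty)$. For $r\in\mathbb R$ the fractional iterate $E^r:[\alpha,\infty)\to[\alpha,\infty)$ is $E^r(\alpha)=\alpha$, $E^r(x)=S(\beta^rS^{-1}(x))$ for $x>\alpha$; $L^r=E^{-r}$, so $L(x)=\log x-\log\lambda$. *)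

From Stdlib Require Import Reals Lra.
Open Scope R_scope.

Definition lim_at_infty (f : R -> R) (l : R) : Prop :=
  forall eps, eps > 0 -> exists M, forall x, x > M -> Rabs (f x - l) < eps.

(* Fractional iterate E^r on [alpha, +oo): E^r(alpha) = alpha,
   E^r(x) = S(beta^r S^{-1}(x)) for x > alpha. *)
Definition Efrac (alpha beta : R) (S Sinv : R -> R) (r x : R) : R :=
  if Rle_dec x alpha then alpha else S (Rpower beta r * Sinv x).

Definition Lfrac (alpha beta : R) (S Sinv : R -> R) (r x : R) : R :=
  Efrac alpha beta S Sinv (- r) x.

(* Along the geometric grid q^j with q^N = beta, the values a_j = S(q^j) obey
   a_(j+N) = lam exp a_j.  Hence the increments a_(j+1) - a_j grow at least
   geometrically and a_j / a_(j+1) -> 0; by monotonicity of S this gives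
   S(c v) / S(v) -> 0 for every 0 < c < 1.  With c = beta^(-r) and x = S(v) this is
   L^r(x)/x -> 0.  For s > r write L^r(x) = lam exp(B), L^s(x) = lam exp(A); the
   same estimate with c = beta^(r-s) gives gamma A <= B/2, so
   (L^s)^gamma / L^r <= lam^(gamma-1) exp(-B/2) -> 0. *)
From Stdlib Require Import Reals Lra Lia.
Open Scope R_scope.

Lemma lim_at_infty_0_of_bound (f : R -> R) :
  (forall eps, 0 < eps -> exists M, forall x, M < x -> 0 <= f x <= eps) ->
  lim_at_infty f 0.
Proof.
  intros Hbound eps Heps.
  destruct (Hbound (eps / 2) ltac:(lra)) as [M HM].
  exists M; intros x Hx; destruct (HM x Hx).
  rewrite Rminus_0_r, Rabs_right; lra.
Qed.

Lemma pow_unbounded (q Y : R) : 1 < q -> exists n, Y < q ^ n.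
Proof.
  intros Hq.
  destruct (Pow_x_infinity q ltac:(rewrite Rabs_right; lra) (Y + 1)) as [n Hn].
  exists n; specialize (Hn n (le_n n)).
  rewrite Rabs_right in Hn by (left; apply pow_lt; lra); lra.
Qed.

Lemma pow_bracket (q v : R) : 1 < q -> 1 <= v -> exists j, q ^ j <= v < q ^ S j.
Proof.
  intros Hq Hv; destruct (pow_unbounded q v Hq) as [n Hn].
  induction n as [|n IH].
  - simpl in Hn; lra.
  - destruct (Rlt_le_dec v (q ^ n)) as [Hlt|Hge].
    + exact (IH Hlt).
    + now exists n.
Qed.

Lemma pos_lower_bound_upto (d : nat -> R) (n : nat) :
  (forall i, 0 < d i) -> exists del, 0 < del /\ forall i, (i <= n)%nat -> del <= d i.
Proof.
  intros Hd; induction n as [|n [del [Hdel Hle]]].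
  - exists (d 0%nat); split; [apply Hd|].
    intros i Hi; replace i with 0%nat by lia; lra.
  - exists (Rmin del (d (S n))); split; [now apply Rmin_case|].
    intros i Hi; destruct (Nat.eq_dec i (S n)) as [->|Hne]; [apply Rmin_r|].
    eapply Rle_trans; [apply Rmin_l | apply Hle; lia].
Qed.

Lemma root_grid (beta c : R) :
  1 < beta -> 0 < c < 1 ->
  exists q N, 1 < q /\ (0 < N)%nat /\ q ^ N = beta /\ c * q ^ 2 <= 1.
Proof.
  intros Hbeta Hc.
  assert (Hlnb : 0 < ln beta) by (rewrite <- ln_1; apply ln_increasing; lra).
  assert (Hlnc : 0 < ln (/ c)).
  { rewrite <- ln_1; apply ln_increasing; [lra|].
    rewrite <- Rinv_1; apply Rinv_lt_contravar; lra. }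
  destruct (INR_unbounded (2 * ln beta / ln (/ c))) as [N HN].
  assert (HNpos : 0 < INR N).
  { enough (0 < 2 * ln beta / ln (/ c)) by lra.
    apply Rdiv_lt_0_compat; lra. }
  exists (Rpower beta (/ INR N)), N; repeat split.
  - rewrite <- (Rpower_O beta) by lra.
    apply Rpower_lt; [lra | now apply Rinv_0_lt_compat].
  - apply INR_lt; simpl; lra.
  - rewrite <- Rpower_pow by (unfold Rpower; apply exp_pos).
    rewrite Rpower_mult, Rinv_l by lra; apply Rpower_1; lra.
  - rewrite <- Rpower_pow by (unfold Rpower; apply exp_pos).
    rewrite Rpower_mult; unfold Rpower.
    replace c with (/ exp (ln (/ c)))
      by (rewrite exp_ln by (apply Rinv_0_lt_compat; lra); apply Rinv_inv).
    apply Rmult_le_reg_l with (exp (ln (/ c))); [apply exp_pos|].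
    rewrite <- Rmult_assoc, Rinv_r, Rmult_1_l, Rmult_1_r by (apply Rgt_not_eq, exp_pos).
    left; apply exp_increasing.
    replace (/ INR N * INR 2 * ln beta) with (2 * ln beta / INR N) by (simpl; field; lra).
    apply Rmult_lt_reg_r with (INR N); [lra|].
    apply Rmult_lt_reg_r with (/ ln (/ c)); [now apply Rinv_0_lt_compat|].
    replace (2 * ln beta / INR N * INR N * / ln (/ c)) with (2 * ln beta / ln (/ c))
      by (field; lra).
    replace (ln (/ c) * INR N * / ln (/ c)) with (INR N) by (field; lra).
    exact HN.
Qed.

Section IteratedExponentialGrid.

Variables (lam beta : R) (a : nat -> R) (N : nat).
Hypothesis beta_gt1 : 1 < beta.
Hypothesis N_gt0 : (0 < N)%nat.
Hypothesis a_incr : forall j, a j < a (S j).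
Hypothesis a_gt_beta : forall j, beta < a j.
Hypothesis a_rec : forall j, a (j + N)%nat = lam * exp (a j).

Let d j := a (S j) - a j.

Let d_pos j : 0 < d j.
Proof. unfold d; pose proof (a_incr j); lra. Qed.

(* d_(j+N) = a_(j+N) (exp d_j - 1) >= a_(j+N) d_j. *)
Lemma grid_incr_rec j : beta * d j <= d (j + N)%nat.
Proof.
  unfold d; replace (S (j + N)) with (S j + N)%nat by lia.
  rewrite !a_rec; replace (a (S j)) with (a j + d j) by (unfold d; ring).
  rewrite exp_plus.
  pose proof (a_gt_beta (j + N)) as Hbig; rewrite a_rec in Hbig.
  pose proof (exp_ineq1_le (d j)); pose proof (d_pos j).
  set (X := lam * exp (a j)) in *.
  replace (lam * (exp (a j) * exp (d j))) with (X * exp (d j)) by (unfold X; ring).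
  nra.
Qed.

Lemma grid_incr_geometric k i : beta ^ k * d i <= d (i + k * N)%nat.
Proof.
  induction k as [|k IH].
  - rewrite Nat.add_0_r; simpl; lra.
  - replace (i + S k * N)%nat with ((i + k * N) + N)%nat by lia.
    eapply Rle_trans; [|apply grid_incr_rec]; simpl.
    rewrite Rmult_assoc; apply Rmult_le_compat_l; [lra | exact IH].
Qed.

Lemma grid_incr_unbounded Y : exists J, forall j, (J <= j)%nat -> Y <= d j.
Proof.
  destruct (pos_lower_bound_upto d N d_pos) as [del [Hdel Hmin]].
  destruct (pow_unbounded beta (Y / del) beta_gt1) as [K HK].
  exists (K * N)%nat; intros j Hj.
  rewrite (Nat.div_mod_eq j N), Nat.add_comm, Nat.mul_comm.
  assert (Hi : (j mod N < N)%nat) by (apply Nat.mod_upper_bound; lia).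
  assert (HkK : (K <= j / N)%nat) by (apply Nat.div_le_lower_bound; lia).
  eapply Rle_trans; [|apply grid_incr_geometric].
  pose proof (Hmin (j mod N) ltac:(lia)).
  pose proof (Rle_pow beta K (j / N) ltac:(lra) HkK).
  pose proof (pow_lt beta K ltac:(lra)).
  assert (Y <= beta ^ K * del).
  { apply Rmult_lt_compat_r with (r := del) in HK; [|lra].
    unfold Rdiv in HK; rewrite Rmult_assoc, Rinv_l, Rmult_1_r in HK; lra. }
  nra.
Qed.

(* a_(j+N+1) = a_(j+N) exp d_j >= a_(j+N) (1 + d_j). *)
Lemma grid_ratio_vanishes e :
  0 < e -> exists J, forall m, (J <= m)%nat -> a m <= e * a (S m).
Proof.
  intros He; destruct (grid_incr_unbounded (/ e)) as [J HJ].
  exists (J + N)%nat; intros m Hm.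
  replace m with ((m - N) + N)%nat by lia.
  replace (S (m - N + N)) with (S (m - N) + N)%nat by lia.
  specialize (HJ (m - N)%nat ltac:(lia)).
  rewrite !a_rec; replace (a (S (m - N))) with (a (m - N) + d (m - N)) by (unfold d; ring).
  rewrite exp_plus.
  pose proof (a_gt_beta (m - N + N)) as Hbig; rewrite a_rec in Hbig.
  pose proof (exp_ineq1_le (d (m - N))).
  assert (1 <= e * exp (d (m - N))).
  { apply Rmult_le_compat_l with (r := e) in HJ; [|lra].
    rewrite Rinv_r in HJ by lra; nra. }
  set (X := lam * exp (a (m - N))) in *.
  replace (lam * (exp (a (m - N)) * exp (d (m - N)))) with (X * exp (d (m - N)))
    by (unfold X; ring).
  nra.
Qed.

End IteratedExponentialGrid.

Section SchroederGrowth.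

Variables (lam beta : R) (S : R -> R).
Hypothesis beta_gt1 : 1 < beta.
Hypothesis S_0 : S 0 = beta.
Hypothesis S_schroeder : forall z, S (beta * z) = lam * exp (S z).
Hypothesis S_incr : forall z w, z < w -> S z < S w.

Lemma S_dilation_negligible c eps :
  0 < c < 1 -> 0 < eps -> exists M, forall v, M < v -> S (c * v) <= eps * S v.
Proof.
  intros Hc Heps.
  destruct (root_grid beta c beta_gt1 Hc) as [q [N [Hq [HN [HqN Hcq]]]]].
  assert (Hqpos : forall j, 0 < q ^ j) by (intro; apply pow_lt; lra).
  assert (Hqincr : forall j, q ^ j < q ^ Datatypes.S j)
    by (intro j; apply Rlt_pow; [lra | lia]).
  assert (Hgrid_gt : forall j, beta < S (q ^ j))
    by (intro j; rewrite <- S_0; apply S_incr, Hqpos).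
  assert (Hgrid_rec : forall j, S (q ^ (j + N)) = lam * exp (S (q ^ j)))
    by (intro j; rewrite pow_add, Rmult_comm, HqN; apply S_schroeder).
  destruct (grid_ratio_vanishes lam beta (fun j => S (q ^ j)) N beta_gt1 HN
              (fun j => S_incr _ _ (Hqincr j)) Hgrid_gt Hgrid_rec eps Heps) as [J HJ].
  exists (q ^ (J + 2)); intros v Hv.
  pose proof (pow_R1_Rle q (J + 2) ltac:(lra)).
  destruct (pow_bracket q v Hq ltac:(lra)) as [j [Hjv Hvj]].
  assert (HjJ : (J + 2 <= j)%nat).
  { destruct (Compare_dec.le_lt_dec (J + 2) j) as [|Hlt]; [assumption|].
    pose proof (Rle_pow q (Datatypes.S j) (J + 2) ltac:(lra) Hlt); lra. }
  destruct j as [|m]; [lia|].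
  assert (Hcv : c * v < q ^ m).
  { replace (q ^ Datatypes.S (Datatypes.S m)) with (q ^ 2 * q ^ m) in Hvj by (simpl; ring).
    pose proof (Hqpos m); nra. }
  assert (HSv : S (q ^ Datatypes.S m) <= S v)
    by (destruct Hjv as [Hlt|<-]; [left; now apply S_incr | right; reflexivity]).
  pose proof (S_incr _ _ Hcv); pose proof (HJ m ltac:(lia)); nra.
Qed.

End SchroederGrowth.

Lemma Rpower_exp_ratio lam A B gamma :
  0 < lam ->
  Rpower (lam * exp A) gamma / (lam * exp B) = exp ((gamma - 1) * ln lam + gamma * A - B).
Proof.
  intros Hlam; unfold Rpower; rewrite ln_mult, ln_exp by (auto; apply exp_pos).
  rewrite <- (exp_ln lam) at 2 by assumption.
  rewrite <- exp_plus; unfold Rdiv; rewrite <- exp_Ropp, <- exp_plus.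
  f_equal; ring.
Qed.

Section FractionalIterates.

Variables (lam alpha beta : R) (S Sinv : R -> R).
Hypothesis lam_pos : 0 < lam.
Hypothesis alpha_ge0 : 0 <= alpha.
Hypothesis beta_gt1 : 1 < beta.
Hypothesis S_0 : S 0 = beta.
Hypothesis S_schroeder : forall z, S (beta * z) = lam * exp (S z).
Hypothesis S_incr : forall z w, z < w -> S z < S w.
Hypothesis S_gt_alpha : forall z, alpha < S z.
Hypothesis S_onto : forall y, alpha < y -> exists z, S z = y.
Hypothesis S_Sinv : forall y, alpha < y -> S (Sinv y) = y.

Let L r x := Lfrac alpha beta S Sinv r x.

Lemma Lfrac_S r x : alpha < x -> L r x = S (Rpower beta (- r) * Sinv x).
Proof.
  intros Hx; unfold L, Lfrac, Efrac; destruct (Rle_dec x alpha); [lra | reflexivity].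
Qed.

Lemma Sinv_unbounded M : exists X, forall x, X < x -> alpha < x /\ M < Sinv x.
Proof.
  exists (Rmax alpha (S M)); intros x Hx.
  pose proof (Rmax_l alpha (S M)); pose proof (Rmax_r alpha (S M)).
  split; [lra|].
  pose proof (S_Sinv x ltac:(lra)) as HSx.
  destruct (Rlt_le_dec M (Sinv x)) as [|[Hlt|Heq]]; [assumption| |].
  - apply S_incr in Hlt; lra.
  - rewrite Heq in HSx; lra.
Qed.

Lemma S_unbounded Y : exists z0, forall w, z0 < w -> Y < S w.
Proof.
  destruct (S_onto (Rmax Y (alpha + 1))) as [z0 Hz0].
  { pose proof (Rmax_r Y (alpha + 1)); lra. }
  exists z0; intros w Hw.
  pose proof (S_incr _ _ Hw); pose proof (Rmax_l Y (alpha + 1)); lra.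
Qed.

Lemma Lfrac_div_id_lim r : 0 < r -> lim_at_infty (fun x => L r x / x) 0.
Proof.
  intros Hr; apply lim_at_infty_0_of_bound; intros eps Heps.
  assert (Hc : 0 < Rpower beta (- r) < 1).
  { split; [apply exp_pos|].
    rewrite <- (Rpower_O beta) by lra; apply Rpower_lt; lra. }
  destruct (S_dilation_negligible lam beta S beta_gt1 S_0 S_schroeder S_incr
              _ eps Hc Heps) as [M HM].
  destruct (Sinv_unbounded M) as [X HX]; exists X; intros x Hx.
  destruct (HX x Hx) as [Hax HMx].
  specialize (HM _ HMx); rewrite S_Sinv in HM by assumption.
  rewrite Lfrac_S by assumption.
  pose proof (S_gt_alpha (Rpower beta (- r) * Sinv x)).
  split.
  - left; apply Rdiv_lt_0_compat; lra.
  - apply Rmult_le_reg_r with x; [lra|].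
    unfold Rdiv; rewrite Rmult_assoc, Rinv_l, Rmult_1_r by lra; lra.
Qed.

(* Both iterates are written as S(beta w') = lam exp(S w'), with w = beta^(-r-1) Sinv x. *)
Lemma Lfrac_power_ratio_lim r s gamma :
  0 < r -> r < s -> 0 < gamma ->
  lim_at_infty (fun x => Rpower (L s x) gamma / L r x) 0.
Proof.
  intros Hr Hrs Hg; apply lim_at_infty_0_of_bound; intros eps Heps.
  set (c := Rpower beta (- (s - r))).
  assert (Hc : 0 < c < 1).
  { split; [apply exp_pos|].
    rewrite <- (Rpower_O beta) by lra; apply Rpower_lt; lra. }
  destruct (S_dilation_negligible lam beta S beta_gt1 S_0 S_schroeder S_incr
              c (/ (2 * gamma)) Hc ltac:(apply Rinv_0_lt_compat; lra)) as [M1 HM1].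
  destruct (S_unbounded (2 * ((gamma - 1) * ln lam - ln eps))) as [z0 Hz0].
  set (P := Rpower beta (- r) / beta).
  assert (HP : 0 < P) by (apply Rdiv_lt_0_compat; [apply exp_pos | lra]).
  destruct (Sinv_unbounded (Rmax M1 z0 / P)) as [X HX]; exists X; intros x Hx.
  destruct (HX x Hx) as [Hax Ht].
  set (w := P * Sinv x).
  assert (Hw : Rmax M1 z0 < w).
  { apply Rmult_lt_compat_l with (r := P) in Ht; [|assumption].
    unfold w; replace (P * (Rmax M1 z0 / P)) with (Rmax M1 z0) in Ht by (field; lra); lra. }
  pose proof (Rmax_l M1 z0); pose proof (Rmax_r M1 z0).
  rewrite !Lfrac_S by assumption.
  replace (Rpower beta (- r) * Sinv x) with (beta * w) by (unfold w, P; field; lra).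
  replace (Rpower beta (- s) * Sinv x) with (beta * (c * w)).
  2:{ unfold w, P, c; replace (- s) with (- (s - r) + - r) by ring.
      rewrite Rpower_plus; field; lra. }
  rewrite !S_schroeder, Rpower_exp_ratio by assumption.
  pose proof (HM1 w ltac:(lra)) as Hdil; pose proof (Hz0 w ltac:(lra)).
  assert (HgA : gamma * S (c * w) <= S w / 2).
  { apply Rmult_le_compat_l with (r := gamma) in Hdil; [|lra].
    replace (gamma * (/ (2 * gamma) * S w)) with (S w / 2) in Hdil by (field; lra); lra. }
  split; [left; apply exp_pos|].
  left; rewrite <- (exp_ln eps) by assumption; apply exp_increasing; lra.
Qed.

End FractionalIterates.

Theorem mainTheorem8 :
  forall (lam alpha beta : R),
    0 < lam -> lam < exp (-1) ->
    alpha < 1 -> 1 < beta ->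
    lam * exp alpha = alpha -> lam * exp beta = beta ->
  forall (S : R -> R),
    S 0 = beta -> derivable_pt_lim S 0 1 ->
    (forall z, S (beta * z) = lam * exp (S z)) ->
    (forall z w, z < w -> S z < S w) ->
    (forall z, alpha < S z) ->
    (forall y, alpha < y -> exists z, S z = y) ->
  forall (Sinv : R -> R),
    (forall y, alpha < y -> S (Sinv y) = y) ->
    (forall r, 0 < r ->
       lim_at_infty (fun x => Lfrac alpha beta S Sinv r x / x) 0) /\
    (forall r s gamma, 0 < r -> r < s -> 0 < gamma ->
       lim_at_infty
         (fun x => Rpower (Lfrac alpha beta S Sinv s x) gamma
                   / Lfrac alpha beta S Sinv r x) 0).
Proof.
  intros lam alpha beta Hlam _ _ Hbeta Halpha _ S HS0 _ Hschroeder Hincr Hgt Honto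
    Sinv HSinv.
  assert (Halpha0 : 0 <= alpha)
    by (rewrite <- Halpha; left; apply Rmult_lt_0_compat; [assumption | apply exp_pos]).
  split; [eapply Lfrac_div_id_lim | eapply Lfrac_power_ratio_lim]; eassumption.
Qed.
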